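(* Let $T$ be a binary search tree whose nodes are labelled with integers in $\{1,\dots,t\}$ so that no node has an ancestor with a label greater than its own label. For $j \in \{1,\dots,t\}$, let $L_j$ be the set of nodes with label $j$. Assume $|L_j| = 2^{2^j}$ for $j<t$ and $|L_t| \le 2^{2^t}$. Assume also that every maximal connected subtree $T'$ of $T$ consisting of nodes of a single layer $L_j$ is balanced, in the sense that every node of $T'$ has depth within $T'$ at most $O(\lg |T'|)$ (for instance, $T'$ is a red-black tree). Then every node $x \in L_j$ has depth $O(2^j)$ in $T$.
   Context: $\lg x := \log_2(x+2)$. The maximal connected single-layer subtrees are called layer-subtrees. The constant in the balance condition is uniform over all layer-subtrees. *)

From Stdlib Require Import Reals Lra Lia List Sorted Arith.
Import ListNotations.
Open Scope R_scope.

Inductive tree : Type :=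
| Leaf : tree
| Node : tree -> nat (* key *) -> nat (* label *) -> tree -> tree.

Fixpoint inorder (t : tree) : list nat :=
  match t with
  | Leaf => []
  | Node l k _ r => inorder l ++ k :: inorder r
  end.

Definition is_bst (t : tree) : Prop := Sorted Nat.lt (inorder t).

(* Nodes are addressed by paths from the root (false = left, true = right);
   the depth of the node at path p is length p (root has depth 0). *)
Fixpoint subtree_at (t : tree) (p : list bool) : tree :=
  match p, t with
  | [], _ => t
  | _, Leaf => Leaf
  | false :: p', Node l _ _ _ => subtree_at l p'
  | true :: p', Node _ _ _ r => subtree_at r p'
  end.

Definition label_at (t : tree) (p : list bool) : option nat :=
  match subtree_at t p with
  | Leaf => None
  | Node _ _ j _ => Some j
  end.

Definition is_node (t : tree) (p : list bool) : Prop := exists j, label_at t p = Some j.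

Fixpoint size (t : tree) : nat :=
  match t with
  | Leaf => 0%nat
  | Node l _ _ r => (size l + 1 + size r)%nat
  end.

Fixpoint count_label (j : nat) (t : tree) : nat :=
  match t with
  | Leaf => 0%nat
  | Node l _ lab r => (count_label j l + (if Nat.eqb lab j then 1 else 0) + count_label j r)%nat
  end.

Fixpoint prune (j : nat) (t : tree) : tree :=
  match t with
  | Leaf => Leaf
  | Node l k lab r => if Nat.eqb lab j then Node (prune j l) k lab (prune j r) else Leaf
  end.

(* q is the root of a layer-subtree (maximal connected single-layer subtree):
   q is a node, and either q is the root of t or its parent has a different label. *)
Definition layer_root (t : tree) (q : list bool) : Prop :=
  exists j, label_at t q = Some j /\
   (q = [] \/ exists q' b, q = q' ++ [b] /\ label_at t q' <> Some j).

Definition layer_subtree (t : tree) (q : list bool) : tree :=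
  match label_at t q with
  | Some j => prune j (subtree_at t q)
  | None => Leaf
  end.

Definition lg (x : R) : R := ln (x + 2) / ln 2.

Definition labels_in_range (t : nat) (T : tree) : Prop :=
  forall p j, label_at T p = Some j -> (1 <= j <= t)%nat.

Definition ancestor_monotone (T : tree) : Prop :=
  forall p s i j, label_at T p = Some i -> label_at T (p ++ s) = Some j -> (i <= j)%nat.

Definition layer_sizes (t : nat) (T : tree) : Prop :=
  (forall j, (1 <= j < t)%nat -> count_label j T = 2 ^ (2 ^ j))%nat /\
  (count_label t T <= 2 ^ (2 ^ t))%nat.

Definition layers_balanced (c : R) (T : tree) : Prop :=
  forall q, layer_root T q ->
    forall s, is_node (layer_subtree T q) s ->
      INR (length s) <= c * lg (INR (size (layer_subtree T q))).

(* Every node p of T factors as p = q ++ s with q the root of the layer-subtree containing p.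
   Balance bounds |s| by |c| lg |L_j| = O(2^j), and the parent of q lies in a strictly lower
   layer i < j, so by induction its depth is O(2^i) <= O(2^(j-1)).  The bounds for the layers
   below j thus sum to a geometric series, and the depth of p is O(2^j). *)
From Stdlib Require Import Reals List Lra Lia Arith.
Import ListNotations.
Open Scope R_scope.

Lemma subtree_at_Leaf p : subtree_at Leaf p = Leaf.
Proof. destruct p as [|[] p]; reflexivity. Qed.

Lemma subtree_at_nil u : subtree_at u [] = u.
Proof. destruct u; reflexivity. Qed.

Lemma subtree_at_app u a b : subtree_at u (a ++ b) = subtree_at (subtree_at u a) b.
Proof.
  revert u; induction a as [|x a IH]; intros u; [now rewrite subtree_at_nil|].
  destruct u as [|l k lab r].
  - now rewrite !subtree_at_Leaf.
  - destruct x; apply IH.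
Qed.

Lemma label_at_app u a b : label_at u (a ++ b) = label_at (subtree_at u a) b.
Proof. unfold label_at. now rewrite subtree_at_app. Qed.

Lemma label_at_prefix u a b j : label_at u (a ++ b) = Some j -> exists i, label_at u a = Some i.
Proof.
  unfold label_at. rewrite subtree_at_app.
  destruct (subtree_at u a); [rewrite subtree_at_Leaf; discriminate | eauto].
Qed.

Lemma subtree_at_prune j u s :
  subtree_at (prune j u) s = Leaf \/ subtree_at (prune j u) s = prune j (subtree_at u s).
Proof.
  revert u; induction s as [|a s IH]; intros u.
  - right. now rewrite !subtree_at_nil.
  - destruct u as [|l k lab r]; [left; now destruct a|].
    simpl. destruct (Nat.eqb lab j).
    + destruct a; apply IH.
    + left. now destruct a.
Qed.

Lemma label_at_prune_nil j u : label_at u [] = Some j -> label_at (prune j u) [] = Some j.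
Proof.
  destruct u as [|l k lab r]; [discriminate|].
  intros [= ->]. unfold label_at; simpl. now rewrite Nat.eqb_refl.
Qed.

Lemma label_at_prune_snoc j u s b :
  label_at (prune j u) s = Some j -> label_at u (s ++ [b]) = Some j ->
  label_at (prune j u) (s ++ [b]) = Some j.
Proof.
  unfold label_at. rewrite !subtree_at_app.
  destruct (subtree_at_prune j u s) as [-> | ->]; [discriminate|].
  destruct (subtree_at u s) as [|l k lab r]; [discriminate|]; simpl.
  destruct (Nat.eqb lab j); [|discriminate]. intros _.
  destruct b; [destruct r as [|? ? lab' ?] | destruct l as [|? ? lab' ?]];
    simpl; try discriminate; intros [= ->]; now rewrite Nat.eqb_refl.
Qed.

Lemma layer_decomposition u p j : label_at u p = Some j ->
  exists q s, p = q ++ s /\ label_at u q = Some j /\ layer_root u q /\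
    label_at (prune j (subtree_at u q)) s = Some j.
Proof.
  revert j; induction p as [|x p IH] using rev_ind; intros j Hp.
  - exists [], []. repeat split; auto.
    + exists j. split; [exact Hp | now left].
    + apply label_at_prune_nil. now rewrite subtree_at_nil.
  - assert (new_root : label_at u p <> Some j ->
      exists q s, p ++ [x] = q ++ s /\ label_at u q = Some j /\ layer_root u q /\
        label_at (prune j (subtree_at u q)) s = Some j).
    { intros Hne. exists (p ++ [x]), []. repeat split.
      - now rewrite app_nil_r.
      - exact Hp.
      - exists j. split; [exact Hp|]. right. now exists p, x.
      - apply label_at_prune_nil. now rewrite <- label_at_app, app_nil_r. }
    destruct (label_at u p) as [i|] eqn:Hi; [|apply new_root; discriminate].
    destruct (Nat.eq_dec i j) as [-> | Hij]; [|apply new_root; congruence].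
    destruct (IH j eq_refl) as (q & s & -> & Hq & Hroot & Hs).
    exists q, (s ++ [x]). repeat split; auto.
    + now rewrite app_assoc.
    + apply label_at_prune_snoc; [exact Hs|].
      now rewrite <- label_at_app, app_assoc.
Qed.

Lemma size_prune_le_count j u : (size (prune j u) <= count_label j u)%nat.
Proof.
  induction u as [|l IHl k lab r IHr]; simpl; [lia|].
  destruct (Nat.eqb lab j); simpl; lia.
Qed.

Lemma count_label_subtree_at j u q : (count_label j (subtree_at u q) <= count_label j u)%nat.
Proof.
  revert u; induction q as [|a q IH]; intros u; [rewrite subtree_at_nil; lia|].
  destruct u as [|l k lab r]; [rewrite subtree_at_Leaf; lia|].
  simpl. destruct a; [specialize (IH r) | specialize (IH l)]; lia.
Qed.

Lemma ln_le x y : 0 < x -> x <= y -> ln x <= ln y.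
Proof.
  intros Hx [Hxy | ->]; [left; now apply ln_increasing | now right].
Qed.

Lemma lg_le_pow2 n N : (n <= 2 ^ N)%nat -> 0 <= lg (INR n) <= INR N + 2.
Proof.
  intros Hn. unfold lg, Rdiv.
  assert (ln2_pos : 0 < ln 2) by (rewrite <- ln_1; apply ln_increasing; lra).
  assert (Hn' : INR n <= 2 ^ N).
  { apply le_INR in Hn. now rewrite pow_INR in Hn. }
  assert (pow_ge1 : 1 <= 2 ^ N) by (apply pow_R1_Rle; lra).
  pose proof (pos_INR n).
  assert (ln_ge0 : 0 <= ln (INR n + 2)) by (rewrite <- ln_1; apply ln_le; lra).
  assert (ln_le_pow : ln (INR n + 2) <= (INR N + 2) * ln 2).
  { replace ((INR N + 2) * ln 2) with (ln (2 ^ (N + 2)))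
      by (rewrite ln_pow by lra; rewrite plus_INR; simpl; ring).
    apply ln_le; [lra|]. rewrite pow_add. simpl. lra. }
  split.
  - apply Rmult_le_pos; [exact ln_ge0 | left; now apply Rinv_0_lt_compat].
  - apply (Rmult_le_reg_r (ln 2)); [exact ln2_pos|].
    rewrite Rmult_assoc, Rinv_l, Rmult_1_r; lra.
Qed.

Section DepthBound.

Variables (c : R) (t : nat) (T : tree).
Hypothesis labels_ok : labels_in_range t T.
Hypothesis monotone : ancestor_monotone T.
Hypothesis sizes : layer_sizes t T.
Hypothesis balanced : layers_balanced c T.

Lemma layer_size_le q j : label_at T q = Some j ->
  (size (prune j (subtree_at T q)) <= 2 ^ (2 ^ j))%nat.
Proof.
  intros Hq. destruct (labels_ok q j Hq) as [j_ge1 j_le_t]. destruct sizes as [below top].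
  pose proof (size_prune_le_count j (subtree_at T q)).
  pose proof (count_label_subtree_at j T q).
  destruct (Nat.eq_dec j t) as [-> | Hne]; [lia|].
  rewrite (below j) in * by lia. lia.
Qed.

Lemma depth_in_layer_le q s j :
  layer_root T q -> label_at T q = Some j ->
  label_at (prune j (subtree_at T q)) s = Some j ->
  INR (length s) <= Rabs c * (2 ^ j + 2).
Proof.
  intros Hroot Hq Hs.
  assert (Hbal := balanced q Hroot s).
  unfold layer_subtree in Hbal. rewrite Hq in Hbal.
  specialize (Hbal (ex_intro _ j Hs)).
  destruct (lg_le_pow2 _ _ (layer_size_le q j Hq)) as [lg_ge0 lg_le].
  rewrite pow_INR in lg_le. simpl (INR 2) in lg_le.
  eapply Rle_trans; [exact Hbal|].
  eapply Rle_trans; [apply Rmult_le_compat_r; [exact lg_ge0 | apply Rle_abs]|].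
  apply Rmult_le_compat_l; [apply Rabs_pos | exact lg_le].
Qed.

(* The "+ 1" makes the invariant strong enough to absorb the edge from q to its parent. *)
Lemma depth_le p j : label_at T p = Some j ->
  INR (length p) + 1 <= (3 * Rabs c + 1) * 2 ^ (j + 1).
Proof.
  remember (length p) as n eqn:Hn. revert p j Hn.
  induction n as [n IH] using (well_founded_induction lt_wf).
  intros p j -> Hp.
  destruct (layer_decomposition T p j Hp) as (q & s & -> & Hq & Hroot & Hs).
  pose proof (depth_in_layer_le q s j Hroot Hq Hs) as Hseg.
  assert (pow_ge1 : 1 <= 2 ^ j) by (apply pow_R1_Rle; lra).
  pose proof (Rabs_pos c).
  assert (slack : Rabs c * (2 ^ j - 1) >= 0) by nra.
  rewrite pow_add, length_app, plus_INR. simpl (2 ^ 1).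
  destruct Hroot as (j' & Hq' & [-> | (q' & b & -> & Hne)]).
  - simpl. nra.
  - rewrite Hq in Hq'. injection Hq' as <-.
    destruct (label_at_prefix T q' [b] j Hq) as [i Hi].
    assert (i_lt_j : (i < j)%nat).
    { assert (i <> j) by (intros ->; contradiction).
      enough (i <= j)%nat by lia.
      apply (monotone q' ([b] ++ s) i j Hi). now rewrite app_assoc. }
    assert (IHq := IH (length q') ltac:(rewrite !length_app; simpl; lia) q' i eq_refl Hi).
    assert (pow_step : 2 ^ (i + 1) <= 2 ^ j) by (apply Rle_pow; [lra | lia]).
    rewrite length_app, plus_INR. simpl (INR (length [b])).
    assert ((3 * Rabs c + 1) * 2 ^ (i + 1) <= (3 * Rabs c + 1) * 2 ^ j)
      by (apply Rmult_le_compat_l; lra).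
    nra.
Qed.

End DepthBound.

Theorem lemma1 :
  forall c : R, exists C : R,
    forall (t : nat) (T : tree),
      is_bst T ->
      labels_in_range t T ->
      ancestor_monotone T ->
      layer_sizes t T ->
      layers_balanced c T ->
      forall (p : list bool) (j : nat),
        label_at T p = Some j ->
        INR (length p) <= C * 2 ^ j.
Proof.
  intros c. exists (2 * (3 * Rabs c + 1)).
  intros t T _ Hlab Hmon Hsz Hbal p j Hp.
  pose proof (depth_le c t T Hlab Hmon Hsz Hbal p j Hp) as Hdepth.
  rewrite pow_add in Hdepth. simpl in Hdepth. lra.
Qed.
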